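(* Let $a\neq 0$ be a real constant and $f,g$ smooth real functions, and consider the affine factorable surface of the second kind $\phi(x,z)=(x,\,f(x)\,g(z+ax),\,z)$ in $G_3^1$ with $1-(fg')^2>0$. If its mean curvature $H$ vanishes identically, then the surface $y(x,z)=f(x)g(z+ax)$ is one of the following, where $f_o,g_o,b_1,\dots,b_{13}$ are real constants: (1) $y=f_o(b_1(z+ax)+b_2)$, or $y=f_o\left(\sqrt{\frac{a^2-1}{a^2f_o^2}}\,(z+ax)+b_3\right)$; (2) $y=g_o(b_4x+b_5)$; (3) $y=b_8(b_6x+b_7)$, or $y=(b_6x+b_7)(b_9(z+ax)+b_{10})$; (4) $y=(b_{12}x+b_{13})(b_{11}(z+ax)+b_{12})$, or $y=\frac{1}{b_{11}}(b_{11}(z+ax)+b_{12})$.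
   Context: The pseudo-Galilean space $G_3^1$ is $\mathbb{R}^3$ with the scalar product $\langle X,Y\rangle=x_1y_1$ if $x_1\neq0$ or $y_1\neq0$, and $\langle X,Y\rangle=x_2y_2-x_3y_3$ if $x_1=y_1=0$. An affine factorable surface of the second kind is $\phi(x,z)=(x,f(x)g(z+ax),z)$ with $a\neq0$ constant. Here $f'$ denotes $df/dx$ and $g',g''$ denote derivatives of $g$ with respect to its argument $v=z+ax$. The mean curvature of this surface is taken to be $H=\dfrac{\Omega}{2(1-(fg')^2)^{3/2}}$, where $\Omega=(1-a^2)fg''-f''g-2af'g'+f^2f''g'^2g+2af'f^2g'^3+a^2f^3g'^2g''$. *)

From Stdlib Require Import Reals.
Open Scope R_scope.

(* [derivs f D]: D is the sequence of all successive derivatives of f,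
   D 0 = f and D (n+1) = (D n)'.  Existence of such D <-> f is smooth (C^oo);
   D 1 and D 2 are then f' and f''. *)
Definition derivs (f : R -> R) (D : nat -> R -> R) : Prop :=
  D 0%nat = f /\ forall (n : nat) (x : R), derivable_pt_lim (D n) x (D (S n) x).

Definition Omega (a f f1 f2 g g1 g2 : R) : R :=
  (1 - a^2) * f * g2 - f2 * g - 2 * a * f1 * g1
  + f^2 * f2 * g1^2 * g + 2 * a * f1 * f^2 * g1^3 + a^2 * f^3 * g1^2 * g2.

(* Mean curvature H = Omega / (2 (1 - (f g')^2)^(3/2)) of
   phi(x,z) = (x, f(x) g(z+ax), z) in the pseudo-Galilean space G_3^1 *)
Definition meanCurv (a : R) (Df Dg : nat -> R -> R) (x z : R) : R :=
  let v := z + a * x in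
  Omega a (Df 0%nat x) (Df 1%nat x) (Df 2%nat x)
          (Dg 0%nat v) (Dg 1%nat v) (Dg 2%nat v)
  / (2 * Rpower (1 - (Df 0%nat x * Dg 1%nat v)^2) (3/2)).

From Stdlib Require Import Reals Lra Classical.
Open Scope R_scope.

(* At a fixed x, write F = f x, Q = f' x, P = f'' x.  For each v, Omega is affine in
   (P, Q); eliminating P and Q between two or three values of v where g'' <> 0 and the
   g'^2 are distinct leaves F * S (F^2) = 0 for a nonzero polynomial S of degree at most
   3.  So the continuous function f^2 takes finitely many values and is constant; then
   f' = f'' = 0, and the equation at two such values of v forces f = 0 (using a <> 0).
   If instead g'' vanishes identically, g is affine and
   Omega = -(1 - F^2 g'^2) (P g + 2 a Q g'), which forces f to be affine when g is
   constant and constant otherwise.  In every case f g is of shape (1) or (3). *)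

Lemma derivable_pt_lim_const_eq0 (h : R -> R) (c x l : R) :
  (forall y, h y = c) -> derivable_pt_lim h x l -> l = 0.
Proof.
  intros Hc Hd.
  apply (uniqueness_limite (fct_cte c) x); [| apply derivable_pt_lim_const].
  exact (derivable_pt_lim_ext h _ x l Hc Hd).
Qed.

Lemma affine_of_const_deriv (h h' : R -> R) (B : R) :
  (forall x, derivable_pt_lim h x (h' x)) -> (forall x, h' x = B) ->
  forall x, h x = h 0 + B * x.
Proof.
  intros Hd HB x.
  destruct (Rtotal_order x 0) as [Hx | [-> | Hx]]; [| lra |].
  - destruct (MVT_cor2 h h' x 0 Hx (fun c _ => Hd c)) as [c [Hc _]].
    rewrite HB in Hc; lra.
  - destruct (MVT_cor2 h h' 0 x Hx (fun c _ => Hd c)) as [c [Hc _]].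
    rewrite HB in Hc; lra.
Qed.

Lemma affine_of_deriv2_eq0 (h h1 h2 : R -> R) :
  (forall x, derivable_pt_lim h x (h1 x)) ->
  (forall x, derivable_pt_lim h1 x (h2 x)) -> (forall x, h2 x = 0) ->
  (forall x, h1 x = h1 0) /\ (forall x, h x = h 0 + h1 0 * x).
Proof.
  intros Hd Hd1 H2.
  assert (H1 : forall x, h1 x = h1 0).
  { intro x. rewrite (affine_of_const_deriv h1 h2 0 Hd1 H2 x). ring. }
  split; [exact H1 | exact (affine_of_const_deriv h h1 (h1 0) Hd H1)].
Qed.

Lemma derivable_pt_lim_sq (h : R -> R) (x l : R) :
  derivable_pt_lim h x l -> derivable_pt_lim (fun y => h y ^ 2) x (2 * h x * l).
Proof.
  intro Hd.
  pose proof (derivable_pt_lim_comp h (fun y => y ^ 2) x l _ Hd (derivable_pt_lim_pow (h x) 2)) as Hc.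
  apply (derivable_pt_lim_ext _ _ _ _ (fun _ => eq_refl)) in Hc.
  replace (2 * h x * l) with (INR 2 * h x ^ Nat.pred 2 * l) by (simpl; ring).
  exact Hc.
Qed.

Lemma IVT_between (h : R -> R) (p q y : R) :
  continuity h -> h p < y < h q -> exists z, h z = y.
Proof.
  intros Hc Hy.
  assert (Hc' : continuity (fun x => h x - y)).
  { intro x. apply continuity_pt_minus; [apply Hc | apply continuity_pt_const; intros ? ?; reflexivity]. }
  destruct (Rle_dec p q) as [Hpq | Hpq].
  - destruct (IVT_cor _ p q Hc' Hpq ltac:(nra)) as [z [_ Hz]]. exists z; lra.
  - destruct (IVT_cor _ q p Hc' ltac:(lra) ltac:(nra)) as [z [_ Hz]]. exists z; lra.
Qed.

Lemma sign_persists (h : R -> R) (v0 : R) :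
  continuity_pt h v0 -> h v0 <> 0 ->
  exists alp, 0 < alp /\ forall w, Rabs (w - v0) < alp -> 0 < h w * h v0.
Proof.
  intros Hc Hv0.
  destruct (Hc (Rabs (h v0)) (Rabs_pos_lt _ Hv0)) as [alp [Halp Hnear]].
  exists alp; split; [exact Halp |]. intros w Hw.
  destruct (Req_dec w v0) as [-> | Hne].
  - nra.
  - pose proof (Hnear w (conj (conj I (not_eq_sym Hne)) Hw)) as Hd.
    simpl in Hd; unfold Rdist in Hd.
    destruct (Rle_dec 0 (h v0));
      [rewrite (Rabs_right (h v0)) in Hd by lra | rewrite (Rabs_left (h v0)) in Hd by lra];
      apply Rabs_def2 in Hd; nra.
Qed.

Definition lagrange4 (S : R -> R) (t1 t2 t3 t4 t : R) : R :=
    S t1 * ((t - t2) * (t - t3) * (t - t4)) / ((t1 - t2) * (t1 - t3) * (t1 - t4))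
  + S t2 * ((t - t1) * (t - t3) * (t - t4)) / ((t2 - t1) * (t2 - t3) * (t2 - t4))
  + S t3 * ((t - t1) * (t - t2) * (t - t4)) / ((t3 - t1) * (t3 - t2) * (t3 - t4))
  + S t4 * ((t - t1) * (t - t2) * (t - t3)) / ((t4 - t1) * (t4 - t2) * (t4 - t3)).

(* A polynomial function of degree at most 3, characterised without coefficients:
   it coincides with its Lagrange interpolant on any four nodes. *)
Definition cubic_fun (S : R -> R) : Prop :=
  forall t1 t2 t3 t4 t, t1 < t2 -> t2 < t3 -> t3 < t4 -> S t = lagrange4 S t1 t2 t3 t4 t.

Lemma cubic_fun_four_roots (S : R -> R) (t1 t2 t3 t4 : R) :
  cubic_fun S -> t1 < t2 -> t2 < t3 -> t3 < t4 ->
  S t1 = 0 -> S t2 = 0 -> S t3 = 0 -> S t4 = 0 -> forall t, S t = 0.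
Proof.
  intros HS H12 H23 H34 Z1 Z2 Z3 Z4 t.
  rewrite (HS t1 t2 t3 t4 t H12 H23 H34). unfold lagrange4.
  rewrite Z1, Z2, Z3, Z4. unfold Rdiv. ring.
Qed.

(* Nonnegativity of [h] makes the four interior values of its range nonzero, hence
   roots of [S]. *)
Lemma continuous_cubic_roots_const (h S : R -> R) (t0 : R) :
  continuity h -> (forall x, 0 <= h x) -> cubic_fun S -> S t0 <> 0 ->
  (forall x, h x = 0 \/ S (h x) = 0) -> forall x y, h x = h y.
Proof.
  intros Hc Hpos HS Ht0 Hroot.
  assert (Hlt : forall p q, h p < h q -> False).
  { intros p q Hpq. apply Ht0.
    set (d := (h q - h p) / 5).
    assert (Hd : 0 < d) by (unfold d; lra).
    assert (Hk : forall k, 1 <= k <= 4 -> S (h p + k * d) = 0).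
    { intros k Hk.
      destruct (IVT_between h p q (h p + k * d) Hc) as [z Hz].
      { unfold d in *; nra. }
      destruct (Hroot z) as [Hz0 | Hz0]; rewrite Hz in Hz0; [| exact Hz0].
      specialize (Hpos p). nra. }
    apply (cubic_fun_four_roots S (h p + 1 * d) (h p + 2 * d) (h p + 3 * d) (h p + 4 * d) HS);
      try lra; apply Hk; lra. }
  intros x y. destruct (Rtotal_order (h x) (h y)) as [H | [H | H]];
    [exfalso; exact (Hlt x y H) | exact H | exfalso; exact (Hlt y x H)].
Qed.

Lemma increasing_distinct_squares (h : R -> R) (v0 alp : R) :
  0 < alp -> (forall u w, v0 - alp < u -> u < w -> w < v0 + alp -> h u < h w) ->
  exists w1 w2 w3,
    Rabs (w1 - v0) < alp /\ Rabs (w2 - v0) < alp /\ Rabs (w3 - v0) < alp /\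
    h w1 <> 0 /\ h w2 <> 0 /\ h w3 <> 0 /\
    h w1 ^ 2 <> h w2 ^ 2 /\ h w1 ^ 2 <> h w3 ^ 2 /\ h w2 ^ 2 <> h w3 ^ 2.
Proof.
  intros Halp Hincr.
  destruct (Rle_dec 0 (h v0)) as [Hnn | Hneg].
  - assert (M1 : h v0 < h (v0 + alp / 4)) by (apply Hincr; lra).
    assert (M2 : h (v0 + alp / 4) < h (v0 + alp / 2)) by (apply Hincr; lra).
    assert (M3 : h (v0 + alp / 2) < h (v0 + 3 * alp / 4)) by (apply Hincr; lra).
    exists (v0 + alp / 4), (v0 + alp / 2), (v0 + 3 * alp / 4).
    repeat split; try (apply Rabs_def1; lra); nra.
  - assert (M1 : h (v0 - alp / 4) < h v0) by (apply Hincr; lra).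
    assert (M2 : h (v0 - alp / 2) < h (v0 - alp / 4)) by (apply Hincr; lra).
    assert (M3 : h (v0 - 3 * alp / 4) < h (v0 - alp / 2)) by (apply Hincr; lra).
    exists (v0 - alp / 4), (v0 - alp / 2), (v0 - 3 * alp / 4).
    repeat split; try (apply Rabs_def1; lra); nra.
Qed.

Lemma Omega_alt (a F Q P G G1 G2 : R) :
  Omega a F Q P G G1 G2 =
  F * G2 * (1 - a ^ 2 + a ^ 2 * F ^ 2 * G1 ^ 2) - (1 - F ^ 2 * G1 ^ 2) * (P * G + 2 * a * Q * G1).
Proof. unfold Omega. ring. Qed.

Definition elim2 (a G1a G2a G1b G2b t : R) : R :=
  G1b * G2a * (1 - a ^ 2 + a ^ 2 * t * G1a ^ 2) * (1 - t * G1b ^ 2)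
  - G1a * G2b * (1 - a ^ 2 + a ^ 2 * t * G1b ^ 2) * (1 - t * G1a ^ 2).

Lemma Omega_elim2 (a F Q P Ga G1a G2a Gb G1b G2b : R) :
  Ga * G1b = Gb * G1a ->
  Omega a F Q P Ga G1a G2a = 0 -> Omega a F Q P Gb G1b G2b = 0 ->
  F * elim2 a G1a G2a G1b G2b (F ^ 2) = 0.
Proof.
  intros Hprop Ha Hb.
  transitivity (G1b * (1 - F ^ 2 * G1b ^ 2) * Omega a F Q P Ga G1a G2a
              - G1a * (1 - F ^ 2 * G1a ^ 2) * Omega a F Q P Gb G1b G2b
              + (1 - F ^ 2 * G1a ^ 2) * (1 - F ^ 2 * G1b ^ 2) * P * (Ga * G1b - Gb * G1a)).
  - unfold elim2, Omega. ring.
  - rewrite Ha, Hb, Hprop. ring.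
Qed.

Lemma elim2_cubic (a G1a G2a G1b G2b : R) : cubic_fun (elim2 a G1a G2a G1b G2b).
Proof.
  intros t1 t2 t3 t4 t H12 H23 H34. unfold lagrange4, elim2. field.
  repeat split; lra.
Qed.

Lemma elim2_neq0 (a G1a G2a G1b G2b : R) :
  G1a <> 0 -> G1b <> 0 -> G2a <> 0 -> G1a ^ 2 <> G1b ^ 2 ->
  elim2 a G1a G2a G1b G2b (/ G1a ^ 2) <> 0.
Proof.
  intros H1a H1b H2a Hsq.
  replace (elim2 a G1a G2a G1b G2b (/ G1a ^ 2))
    with (G1b * G2a * (G1a ^ 2 - G1b ^ 2) / G1a ^ 2) by (unfold elim2; field; auto).
  assert (G1a ^ 2 <> 0) by (apply pow_nonzero; auto).
  assert (G1a ^ 2 - G1b ^ 2 <> 0) by lra.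
  unfold Rdiv. repeat apply Rmult_integral_contrapositive_currified; auto.
  apply Rinv_neq_0_compat; auto.
Qed.

Definition elim3 (a G_1 G1_1 G2_1 G_2 G1_2 G2_2 G_3 G1_3 G2_3 t : R) : R :=
    (G_2 * G1_3 - G_3 * G1_2) * G2_1 * (1 - a ^ 2 + a ^ 2 * t * G1_1 ^ 2)
      * (1 - t * G1_2 ^ 2) * (1 - t * G1_3 ^ 2)
  + (G_3 * G1_1 - G_1 * G1_3) * G2_2 * (1 - a ^ 2 + a ^ 2 * t * G1_2 ^ 2)
      * (1 - t * G1_1 ^ 2) * (1 - t * G1_3 ^ 2)
  + (G_1 * G1_2 - G_2 * G1_1) * G2_3 * (1 - a ^ 2 + a ^ 2 * t * G1_3 ^ 2)
      * (1 - t * G1_1 ^ 2) * (1 - t * G1_2 ^ 2).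

(* The weights are the 2x2 minors of the columns [G] and [G1], so the terms in
   [P] and [Q] cancel as in a determinant with two equal columns. *)
Lemma Omega_elim3 (a F Q P G_1 G1_1 G2_1 G_2 G1_2 G2_2 G_3 G1_3 G2_3 : R) :
  Omega a F Q P G_1 G1_1 G2_1 = 0 -> Omega a F Q P G_2 G1_2 G2_2 = 0 ->
  Omega a F Q P G_3 G1_3 G2_3 = 0 ->
  F * elim3 a G_1 G1_1 G2_1 G_2 G1_2 G2_2 G_3 G1_3 G2_3 (F ^ 2) = 0.
Proof.
  intros H1 H2 H3.
  transitivity
    ((G_2 * G1_3 - G_3 * G1_2) * (1 - F ^ 2 * G1_2 ^ 2) * (1 - F ^ 2 * G1_3 ^ 2)
       * Omega a F Q P G_1 G1_1 G2_1
   + (G_3 * G1_1 - G_1 * G1_3) * (1 - F ^ 2 * G1_1 ^ 2) * (1 - F ^ 2 * G1_3 ^ 2)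
       * Omega a F Q P G_2 G1_2 G2_2
   + (G_1 * G1_2 - G_2 * G1_1) * (1 - F ^ 2 * G1_1 ^ 2) * (1 - F ^ 2 * G1_2 ^ 2)
       * Omega a F Q P G_3 G1_3 G2_3).
  - unfold elim3, Omega. ring.
  - rewrite H1, H2, H3. ring.
Qed.

Lemma elim3_cubic (a G_1 G1_1 G2_1 G_2 G1_2 G2_2 G_3 G1_3 G2_3 : R) :
  cubic_fun (elim3 a G_1 G1_1 G2_1 G_2 G1_2 G2_2 G_3 G1_3 G2_3).
Proof.
  intros t1 t2 t3 t4 t H12 H23 H34. unfold lagrange4, elim3. field.
  repeat split; lra.
Qed.

Lemma elim3_neq0 (a G_1 G1_1 G2_1 G_2 G1_2 G2_2 G_3 G1_3 G2_3 : R) :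
  G_1 * G1_2 <> G_2 * G1_1 -> G1_3 <> 0 -> G2_3 <> 0 ->
  G1_3 ^ 2 <> G1_1 ^ 2 -> G1_3 ^ 2 <> G1_2 ^ 2 ->
  elim3 a G_1 G1_1 G2_1 G_2 G1_2 G2_2 G_3 G1_3 G2_3 (/ G1_3 ^ 2) <> 0.
Proof.
  intros HW H13 H23 Hsq1 Hsq2.
  assert (G1_3 ^ 2 <> 0) by (apply pow_nonzero; auto).
  replace (elim3 a G_1 G1_1 G2_1 G_2 G1_2 G2_2 G_3 G1_3 G2_3 (/ G1_3 ^ 2))
    with ((G_1 * G1_2 - G_2 * G1_1) * G2_3 * (G1_3 ^ 2 - G1_1 ^ 2) * (G1_3 ^ 2 - G1_2 ^ 2)
          / (G1_3 ^ 2 * G1_3 ^ 2)) by (unfold elim3; field; auto).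
  assert (G_1 * G1_2 - G_2 * G1_1 <> 0) by lra.
  assert (G1_3 ^ 2 - G1_1 ^ 2 <> 0) by lra.
  assert (G1_3 ^ 2 - G1_2 ^ 2 <> 0) by lra.
  unfold Rdiv. repeat apply Rmult_integral_contrapositive_currified; auto.
  apply Rinv_neq_0_compat, Rmult_integral_contrapositive_currified; auto.
Qed.

Section MinimalFactorable.

Variables (a : R) (Df Dg : nat -> R -> R).

Local Notation f := (Df 0%nat).
Local Notation f1 := (Df 1%nat).
Local Notation f2 := (Df 2%nat).
Local Notation g := (Dg 0%nat).
Local Notation g1 := (Dg 1%nat).
Local Notation g2 := (Dg 2%nat).

Hypothesis a_neq0 : a <> 0.
Hypothesis Df_deriv : forall n x, derivable_pt_lim (Df n) x (Df (S n) x).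
Hypothesis Dg_deriv : forall n v, derivable_pt_lim (Dg n) v (Dg (S n) v).
Hypothesis spacelike : forall x v, 1 - (f x * g1 v) ^ 2 > 0.
Hypothesis Omega_eq0 : forall x v, Omega a (f x) (f1 x) (f2 x) (g v) (g1 v) (g2 v) = 0.

Lemma f_affine_of_g_const : (forall v, g1 v = 0) -> (forall v, g2 v = 0) -> g 0 <> 0 ->
  forall x, f x = f 0 + f1 0 * x.
Proof.
  intros G1 G2 Hg0.
  assert (F2 : forall x, f2 x = 0).
  { intro x. specialize (Omega_eq0 x 0). rewrite Omega_alt, G1, G2 in Omega_eq0.
    assert (f2 x * g 0 = 0) by lra.
    destruct (Rmult_integral _ _ H); [assumption | contradiction]. }
  exact (proj2 (affine_of_deriv2_eq0 f f1 f2 (Df_deriv 0) (Df_deriv 1) F2)).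
Qed.

Lemma f_const_of_g_affine (B : R) : B <> 0 -> (forall v, g1 v = B) -> (forall v, g2 v = 0) ->
  forall x, f x = f 0.
Proof.
  intros HB G1 G2.
  pose proof (affine_of_const_deriv g g1 B (Dg_deriv 0) G1) as G0.
  assert (F1 : forall x, f1 x = 0).
  { intro x.
    assert (Hlin : forall v, f2 x * (g 0 + B * v) + 2 * a * f1 x * B = 0).
    { intro v. specialize (spacelike x v). rewrite G1 in spacelike.
      assert (E : (1 - (f x * B) ^ 2) * (f2 x * (g 0 + B * v) + 2 * a * f1 x * B)
                  = - Omega a (f x) (f1 x) (f2 x) (g v) (g1 v) (g2 v)).
      { rewrite Omega_alt, G1, G2, (G0 v). ring. }
      rewrite Omega_eq0, Ropp_0 in E.
      destruct (Rmult_integral _ _ E); [lra | assumption]. }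
    pose proof (Hlin 0) as L0. pose proof (Hlin 1) as L1.
    assert (F2 : f2 x * B = 0) by lra.
    destruct (Rmult_integral _ _ F2) as [F2' | F2']; [| contradiction].
    rewrite F2' in L0.
    assert (E : (2 * a * B) * f1 x = 0) by lra.
    destruct (Rmult_integral _ _ E) as [E' | E']; [| assumption].
    exfalso. apply (Rmult_integral_contrapositive_currified (2 * a) B); [lra | |]; assumption. }
  intro x. rewrite (affine_of_const_deriv f f1 0 (Df_deriv 0) F1 x). ring.
Qed.

Lemma factor_of_g_affine : (forall v, g2 v = 0) ->
  (exists F B c, forall x v, f x * g v = F * (B * v + c)) \/
  (exists c m b, forall x v, f x * g v = c * (m * x + b)).
Proof.
  intro G2.
  destruct (affine_of_deriv2_eq0 g g1 g2 (Dg_deriv 0) (Dg_deriv 1) G2) as [G1 G0].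
  destruct (Req_dec (g1 0) 0) as [HB | HB].
  - destruct (Req_dec (g 0) 0) as [Hc | Hc].
    + left. exists 0, 0, 0. intros x v. rewrite G0, Hc, HB. ring.
    + right. exists (g 0), (f1 0), (f 0). intros x v.
      rewrite (f_affine_of_g_const (fun v => eq_trans (G1 v) HB) G2 Hc x), G0, HB. ring.
  - left. exists (f 0), (g1 0), (g 0). intros x v.
    rewrite (f_const_of_g_affine (g1 0) HB G1 G2 x), G0. ring.
Qed.

Lemma three_good_points : (exists v0, g2 v0 <> 0) ->
  exists w1 w2 w3, g2 w1 <> 0 /\ g2 w2 <> 0 /\ g2 w3 <> 0 /\
    g1 w1 <> 0 /\ g1 w2 <> 0 /\ g1 w3 <> 0 /\
    g1 w1 ^ 2 <> g1 w2 ^ 2 /\ g1 w1 ^ 2 <> g1 w3 ^ 2 /\ g1 w2 ^ 2 <> g1 w3 ^ 2.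
Proof.
  intros [v0 Hv0].
  set (s := g2 v0).
  assert (Hc : continuity_pt g2 v0).
  { apply derivable_continuous_pt. exists (Dg 3%nat v0). apply Dg_deriv. }
  destruct (sign_persists g2 v0 Hc Hv0) as [alp [Halp Hsign]].
  assert (Hincr : forall u w, v0 - alp < u -> u < w -> w < v0 + alp -> s * g1 u < s * g1 w).
  { intros u w Hu Huw Hw.
    destruct (MVT_cor2 g1 g2 u w Huw (fun c _ => Dg_deriv 1 c)) as [c [Hmvt Hcuw]].
    assert (0 < g2 c * s) by (apply Hsign, Rabs_def1; lra).
    nra. }
  destruct (increasing_distinct_squares (fun u => s * g1 u) v0 alp Halp Hincr)
    as (w1 & w2 & w3 & A1 & A2 & A3 & N1 & N2 & N3 & D12 & D13 & D23).
  cbv beta in *.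
  exists w1, w2, w3.
  assert (Hnz : forall w, Rabs (w - v0) < alp -> g2 w <> 0).
  { intros w Hw E. specialize (Hsign w Hw). rewrite E in Hsign. lra. }
  rewrite !Rpow_mult_distr in D12, D13, D23.
  repeat split; auto; intro E; [apply N1 | apply N2 | apply N3 | apply D12 | apply D13 | apply D23];
    rewrite E; ring.
Qed.

Lemma f_sq_const (w1 w2 w3 : R) :
  g2 w1 <> 0 -> g2 w3 <> 0 -> g1 w1 <> 0 -> g1 w2 <> 0 -> g1 w3 <> 0 ->
  g1 w1 ^ 2 <> g1 w2 ^ 2 -> g1 w1 ^ 2 <> g1 w3 ^ 2 -> g1 w2 ^ 2 <> g1 w3 ^ 2 ->
  forall x, f x ^ 2 = f 0 ^ 2.
Proof.
  intros Z1 Z3 N1 N2 N3 D12 D13 D23.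
  assert (Hconst : forall S t0, cubic_fun S -> S t0 <> 0 ->
            (forall x, f x * S (f x ^ 2) = 0) -> forall x, f x ^ 2 = f 0 ^ 2).
  { intros S t0 HS Ht0 Hroot x.
    apply (continuous_cubic_roots_const (fun y => f y ^ 2) S t0); auto.
    - intro y. apply derivable_continuous_pt. exists (2 * f y * f1 y).
      apply derivable_pt_lim_sq, Df_deriv.
    - intro y. apply pow2_ge_0.
    - intro y. destruct (Rmult_integral _ _ (Hroot y)) as [E | E]; [left | right; exact E].
      rewrite E. ring. }
  destruct (Req_dec (g w1 * g1 w2) (g w2 * g1 w1)) as [W | W].
  - apply (Hconst _ _ (elim2_cubic a (g1 w1) (g2 w1) (g1 w2) (g2 w2))
             (elim2_neq0 a _ _ _ (g2 w2) N1 N2 Z1 D12)).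
    intro x. apply (Omega_elim2 a _ (f1 x) (f2 x) (g w1) _ _ (g w2)); auto.
  - apply (Hconst _ _ (elim3_cubic a (g w1) (g1 w1) (g2 w1) (g w2) (g1 w2) (g2 w2)
                         (g w3) (g1 w3) (g2 w3))
             (elim3_neq0 a _ _ _ _ _ _ _ _ _ W N3 Z3 (not_eq_sym D13) (not_eq_sym D23))).
    intro x. apply (Omega_elim3 a _ (f1 x) (f2 x)); auto.
Qed.

Lemma f0_eq0 (w1 w2 : R) :
  g2 w1 <> 0 -> g2 w2 <> 0 -> g1 w1 ^ 2 <> g1 w2 ^ 2 ->
  (forall x, f x ^ 2 = f 0 ^ 2) -> f 0 = 0.
Proof.
  intros Z1 Z2 D12 Hsq.
  destruct (Req_dec (f 0) 0) as [E | Hf0]; [exact E | exfalso].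
  assert (F1 : forall x, f1 x = 0).
  { intro x.
    pose proof (derivable_pt_lim_const_eq0 _ _ x _ Hsq
                  (derivable_pt_lim_sq f x _ (Df_deriv 0 x))) as D.
    assert (f x <> 0) by (intro E; specialize (Hsq x); rewrite E in Hsq; nra).
    assert (E : (2 * f x) * f1 x = 0) by lra.
    destruct (Rmult_integral _ _ E); [lra | assumption]. }
  pose proof (derivable_pt_lim_const_eq0 f1 0 0 _ F1 (Df_deriv 1 0)) as F2.
  assert (Hroot : forall w, g2 w <> 0 -> 1 - a ^ 2 + a ^ 2 * f 0 ^ 2 * g1 w ^ 2 = 0).
  { intros w Zw. specialize (Omega_eq0 0 w). rewrite Omega_alt, F1, F2 in Omega_eq0.
    assert (E : f 0 * g2 w * (1 - a ^ 2 + a ^ 2 * f 0 ^ 2 * g1 w ^ 2) = 0) by lra.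
    destruct (Rmult_integral _ _ E) as [E' | E']; [| exact E'].
    destruct (Rmult_integral _ _ E'); contradiction. }
  pose proof (Hroot w1 Z1) as R1. pose proof (Hroot w2 Z2) as R2.
  assert (E : (a ^ 2 * f 0 ^ 2) * (g1 w1 ^ 2 - g1 w2 ^ 2) = 0) by lra.
  destruct (Rmult_integral _ _ E) as [E' | E']; [| lra].
  destruct (Rmult_integral _ _ E') as [A | A];
    [exact (pow_nonzero a 2 a_neq0 A) | exact (pow_nonzero (f 0) 2 Hf0 A)].
Qed.

Lemma f_eq0_of_g2_neq0 : (exists v0, g2 v0 <> 0) -> forall x, f x = 0.
Proof.
  intros Hv0 x.
  destruct (three_good_points Hv0)
    as (w1 & w2 & w3 & Z1 & Z2 & Z3 & N1 & N2 & N3 & D12 & D13 & D23).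
  pose proof (f_sq_const w1 w2 w3 Z1 Z3 N1 N2 N3 D12 D13 D23) as Hsq.
  pose proof (f0_eq0 w1 w2 Z1 Z2 D12 Hsq) as Hf0.
  specialize (Hsq x). rewrite Hf0 in Hsq. nra.
Qed.

Lemma factor_shape :
  (exists F B c, forall x v, f x * g v = F * (B * v + c)) \/
  (exists c m b, forall x v, f x * g v = c * (m * x + b)).
Proof.
  destruct (classic (forall v, g2 v = 0)) as [G2 | G2].
  - exact (factor_of_g_affine G2).
  - apply not_all_ex_not in G2.
    left. exists 0, 0, 0. intros x v. rewrite (f_eq0_of_g2_neq0 G2 x). ring.
Qed.

End MinimalFactorable.

Lemma Omega_eq0_of_meanCurv_eq0 (a : R) (Df Dg : nat -> R -> R) (x z : R) :
  1 - (Df 0%nat x * Dg 1%nat (z + a * x)) ^ 2 > 0 -> meanCurv a Df Dg x z = 0 ->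
  Omega a (Df 0%nat x) (Df 1%nat x) (Df 2%nat x)
    (Dg 0%nat (z + a * x)) (Dg 1%nat (z + a * x)) (Dg 2%nat (z + a * x)) = 0.
Proof.
  intros Hpos H. unfold meanCurv in H.
  assert (Hden : 0 < 2 * Rpower (1 - (Df 0%nat x * Dg 1%nat (z + a * x)) ^ 2) (3 / 2)).
  { unfold Rpower. pose proof (exp_pos ((3 / 2) * ln (1 - (Df 0%nat x * Dg 1%nat (z + a * x)) ^ 2))).
    lra. }
  unfold Rdiv in H. destruct (Rmult_integral _ _ H) as [E | E]; [exact E |].
  exfalso. exact (Rinv_neq_0_compat _ (Rgt_not_eq _ _ Hden) E).
Qed.

Theorem mainTheorem2 (a : R) (f g : R -> R) (Df Dg : nat -> R -> R) :
  a <> 0 ->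
  derivs f Df -> derivs g Dg ->
  (forall x z, 1 - (f x * Dg 1%nat (z + a * x))^2 > 0) ->
  (forall x z, meanCurv a Df Dg x z = 0) ->
  exists fo go b1 b2 b3 b4 b5 b6 b7 b8 b9 b10 b11 b12 b13 : R,
    (forall x z, f x * g (z + a * x) = fo * (b1 * (z + a * x) + b2)) \/
    (forall x z, f x * g (z + a * x) =
        fo * (sqrt ((a^2 - 1) / (a^2 * fo^2)) * (z + a * x) + b3)) \/
    (forall x z, f x * g (z + a * x) = go * (b4 * x + b5)) \/
    (forall x z, f x * g (z + a * x) = b8 * (b6 * x + b7)) \/
    (forall x z, f x * g (z + a * x) = (b6 * x + b7) * (b9 * (z + a * x) + b10)) \/
    (forall x z, f x * g (z + a * x) = (b12 * x + b13) * (b11 * (z + a * x) + b12)) \/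
    (forall x z, f x * g (z + a * x) = 1 / b11 * (b11 * (z + a * x) + b12)).
Proof.
  intros Ha [<- Hfd] [<- Hgd] Hpos Hmc.
  assert (Hv : forall v x, v = v - a * x + a * x) by (intros; ring).
  assert (Hpos' : forall x v, 1 - (Df 0%nat x * Dg 1%nat v) ^ 2 > 0).
  { intros x v. rewrite (Hv v x). apply Hpos. }
  assert (Hom : forall x v, Omega a (Df 0%nat x) (Df 1%nat x) (Df 2%nat x)
                              (Dg 0%nat v) (Dg 1%nat v) (Dg 2%nat v) = 0).
  { intros x v. rewrite (Hv v x). apply Omega_eq0_of_meanCurv_eq0; [apply Hpos | apply Hmc]. }
  destruct (factor_shape a Df Dg Ha Hfd Hgd Hpos' Hom) as [[F [B [c Hfg]]] | [c [m [b Hfg]]]].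
  - exists F, 0, B, c, 0, 0, 0, 0, 0, 0, 0, 0, 0, 0, 0.
    left. intros x z. apply Hfg.
  - exists 0, 0, 0, 0, 0, 0, 0, m, b, c, 0, 0, 0, 0, 0.
    do 3 right. left. intros x z. apply Hfg.
Qed.
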